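(* If $(M,(I,O))$ is a left-connected oriented map with root $r$, then every vertex of $M$ not containing $r$ is incident to a half-edge in $I$, and every face of $M$ not containing $r$ is incident to a half-edge in $O$.
   Context: A map is $M=(H,\sigma,\alpha)$ with $H$ finite, $\alpha$ a fixed-point-free involution, $\sigma$ a permutation, $\langle\sigma,\alpha\rangle$ transitive, with root $r\in H$. Vertices are cycles of $\sigma$, faces are cycles of $\phi=\sigma\alpha$ ($\phi(h)=\sigma(\alpha(h))$); a half-edge is incident to a vertex/face if it belongs to the cycle. An orientation is a partition $H=I\uplus O$ with $\alpha(I)=O$. A left-path is a sequence $h_1,\dots,h_k$ of half-edges in $I$ such that, with $h_0=r$, for each $j$ there is $q_j>0$ with $h_{j-1}=\sigma^{q_j}(\alpha(h_j))$ and $\sigma^p(\alpha(h_j))\in O$ for $p=0,\dots,q_j-1$. The oriented map is left-connected if every half-edge of $I$ is the last element of a left-path. *)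

From mathcomp Require Import all_boot all_fingroup.
Set Implicit Arguments. Unset Strict Implicit. Unset Printing Implicit Defensive.

Section Maps.
Variable H : finType.

Definition is_map (sigma alpha : {perm H}) : Prop :=
  (forall h, alpha (alpha h) = h) /\
  (forall h, alpha h != h) /\
  (forall x y : H, connect (fun a b => (b == sigma a) || (b == alpha a)) x y).

Definition phi (sigma alpha : {perm H}) (h : H) : H := sigma (alpha h).

Definition is_orientation (alpha : {perm H}) (I O : {set H}) : Prop :=
  [/\ I :&: O = set0, I :|: O = setT & [set alpha h | h in I] = O].

Definition left_step (sigma alpha : {perm H}) (O : {set H}) (prev h : H) : Prop :=
  exists q : nat, [/\ 0 < q, prev = iter q sigma (alpha h) &
    forall p, p < q -> iter p sigma (alpha h) \in O].

(* left_path_from prev s : s = h_1 .. h_k is a left-path starting after h_0 = prev. *)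
Fixpoint left_path_from (sigma alpha : {perm H}) (I O : {set H}) (prev : H)
    (s : seq H) : Prop :=
  match s with
  | [::] => True
  | h :: s' => [/\ h \in I, left_step sigma alpha O prev h &
                  left_path_from sigma alpha I O h s']
  end.

Definition left_connected (sigma alpha : {perm H}) (r : H) (I O : {set H}) : Prop :=
  forall h, h \in I -> exists s : seq H, left_path_from sigma alpha I O r (rcons s h).

End Maps.

(* A left-path reaches h only through the vertex of [alpha h]: its previous
   element is [sigma^q (alpha h)].  If a vertex other than that of [r] contains
   some [h0] in [O], then [alpha h0] is in [I] and the element preceding it on a
   left-path lies in the vertex of [h0]; that element is not [r], so it is an
   earlier entry of the path, hence in [I].  Dually, if a face other than that
   of [r] has no half-edge in [O], then [phi h = sigma (alpha h)] is not in [O]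
   for every [h] of the face, which forces [q = 1] in every left-step into the
   face: the previous element is [phi h], again in the face.  Walking a
   left-path to a half-edge of that face backwards therefore never leaves the
   face, and ends at [r]. *)

From mathcomp Require Import all_boot all_fingroup.

Set Implicit Arguments.
Unset Strict Implicit.
Unset Printing Implicit Defensive.

Section LeftPaths.
Variables (H : finType) (sigma alpha : {perm H}) (I O : {set H}).

Lemma orientation_memIO x : is_orientation alpha I O -> (x \in I) || (x \in O).
Proof. by case=> _ IUO _; rewrite -in_setU IUO inE. Qed.

Lemma orientation_alphaO x :
  involutive alpha -> is_orientation alpha I O -> x \in O -> alpha x \in I.
Proof. by move=> alphaK [_ _ <-] /imsetP [i iI ->]; rewrite alphaK. Qed.

Lemma left_path_from_rcons p s h :
  left_path_from sigma alpha I O p (rcons s h) ->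
  [/\ left_path_from sigma alpha I O p s,
      left_step sigma alpha O (last p s) h & h \in I].
Proof.
elim: s p => [|y s IHs] p /=; first by case.
by case=> yI step /IHs [].
Qed.

Lemma last_left_path_from_in p s :
  left_path_from sigma alpha I O p s -> s != [::] -> last p s \in I.
Proof.
elim: s p => [|y s IHs] p //= [yI _ lp] _.
by case: s IHs lp => [|z s] IHs lp //; apply: IHs lp _.
Qed.

Lemma left_step_fconnect prev h :
  left_step sigma alpha O prev h -> fconnect sigma (alpha h) prev.
Proof. by case=> q [_ -> _]; apply: fconnect_iter. Qed.

Lemma left_step_phi hprev h :
  phi sigma alpha h \notin O -> left_step sigma alpha O hprev h ->
  hprev = phi sigma alpha h.
Proof.
move=> phi_hO [[|[|q]] [// _ -> inO]] //.
by have := inO 1 isT; rewrite (negbTE phi_hO).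
Qed.

Lemma left_path_pred_vertex p s h :
  left_path_from sigma alpha I O p (rcons s h) ->
  exists2 h', fconnect sigma (alpha h) h' & (h' = p) \/ (h' \in I).
Proof.
case/left_path_from_rcons=> lp /left_step_fconnect conn _.
exists (last p s) => //; case: s lp {conn} => [|y s] lp; first by left.
by right; apply: last_left_path_from_in lp _.
Qed.

Lemma left_path_in_face p s h :
  (forall x, fconnect (phi sigma alpha) h x -> x \notin O) ->
  left_path_from sigma alpha I O p (rcons s h) ->
  fconnect (phi sigma alpha) h p.
Proof.
elim/last_ind: s h => [|s y IHs] h faceO /left_path_from_rcons [lp step _];
  have phi_h := fconnect1 (phi sigma alpha) h;
  have /= last_phi := left_step_phi (faceO _ phi_h) step.
  by rewrite last_phi.
rewrite last_rcons in last_phi; rewrite last_phi in lp.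
apply: (connect_trans phi_h); apply: IHs lp => x phi_hx.
by apply: faceO; apply: connect_trans phi_h phi_hx.
Qed.

End LeftPaths.

Theorem mainTheorem10 (H : finType) (sigma alpha : {perm H}) (r : H)
    (I O : {set H}) :
  is_map sigma alpha -> is_orientation alpha I O ->
  left_connected sigma alpha r I O ->
  (forall h : H, ~~ fconnect sigma h r ->
     exists2 h', fconnect sigma h h' & h' \in I) /\
  (forall h : H, ~~ fconnect (phi sigma alpha) h r ->
     exists2 h', fconnect (phi sigma alpha) h h' & h' \in O).
Proof.
move=> [alphaK _] orient LC; split=> v v_r.
  case/orP: (orientation_memIO v orient) => [vI | vO]; first by exists v.
  have [s lp] := LC _ (orientation_alphaO alphaK orient vO).
  have [h' + [h'r|h'I]] := left_path_pred_vertex lp; rewrite alphaK => v_h'.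
    by rewrite -h'r v_h' in v_r.
  by exists h'.
case: (boolP [exists h', fconnect (phi sigma alpha) v h' && (h' \in O)]).
  by case/existsP=> h' /andP [vh' h'O]; exists h'.
move/existsPn=> faceO.
have {}faceO x : fconnect (phi sigma alpha) v x -> x \notin O.
  by move=> vx; have := faceO x; rewrite vx.
case/orP: (orientation_memIO v orient) => [vI | vO].
  have [s lp] := LC _ vI.
  by rewrite (left_path_in_face faceO lp) in v_r.
by move: vO; rewrite (negbTE (faceO _ (connect0 _ _))).
Qed.
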